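(* Let $p$ be an odd prime, let $Q_0$ be an integer with $p\mid Q_0$, let $L$ and $v$ be positive integers, and let $\boldsymbol{h}=(h_1,\dots,h_L)\in\mathbb{Z}^L$. For $I\subseteq\{1,\dots,L\}$ put $H_I=\sum_{i\in I}h_i$, let $T=\{H_I: I\subseteq\{1,\dots,L\}\}$, and for $\tau\in T$ let $\mu(\tau)=\left|\{I\subseteq\{1,\dots,L\}: H_I\equiv\tau \ (\mathrm{mod}\ p^v)\}\right|$. If $2\mid\mu(\tau)$ for all $\tau\in T$, then there exists some $1\le i\le L$ such that $p\mid h_i$. *)

From mathcomp Require Import all_boot all_order all_algebra.
Set Implicit Arguments. Unset Strict Implicit. Unset Printing Implicit Defensive.
Import GRing.Theory Num.Theory.
Local Open Scope ring_scope.

Definition subsum (L : nat) (h : 'I_L -> int) (I : {set 'I_L}) : int :=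
  \sum_(i in I) h i.

Definition mult (L : nat) (h : 'I_L -> int) (p v : nat) (tau : int) : nat :=
  #|[set I : {set 'I_L} | (subsum h I == tau %[mod (p ^ v)%N%:Z])%Z]|.

From mathcomp Require Import all_boot all_order all_algebra.
From mathcomp Require Import ring.
Set Implicit Arguments. Unset Strict Implicit. Unset Printing Implicit Defensive.
Import GRing.Theory Num.Theory.
Local Open Scope ring_scope.

(* Work modulo 2 with f_A(r), the parity of the number of subsets of A whose
   sum is r mod M, for M = p^v odd and every h_a a unit mod M.  Adding a to A
   gives f_{a+A}(r) = f_A(r) + f_A(r - h_a).  By induction f_A is never
   constant: if f_{a+A} were identically 1, shifting M times by h_a would flip
   f_A an odd number of times and return to the same residue; if it were
   identically 0, f_A would be invariant under the shift by the unit h_a, hence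
   constant.  For A = {1..L} this contradicts the hypothesis that every
   multiplicity mu(tau) is even, since the multiplicities vanish off T. *)

Lemma coprimez_nat_shift_mod (m c r r' : int) :
  m != 0 -> coprimez c m -> exists k : nat, (r' = r + k%:Z * c %[mod m])%Z.
Proof.
move=> m_nz /coprimezP[[u v] /= uv1].
exists (absz ((r' - r) * u %% m)%Z); rewrite gez0_abs ?modz_ge0 //.
rewrite -modzDmr modzMml modzDmr.
have uc : u * c = 1 - v * m by rewrite -uv1 addrK.
have -> : r + (r' - r) * u * c = (- (r' - r) * v) * m + r'.
  by rewrite -mulrA uc; ring.
by rewrite modzMDl.
Qed.

Lemma iter_shift_addb (g : int -> bool) (c : int) (b : bool) :
  (forall r, g (r + c) = b (+) g r) ->
  forall r (k : nat), g (r + k%:Z * c) = (b && odd k) (+) g r.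
Proof.
move=> g_shift r; elim=> [|k IHk]; first by rewrite mul0r addr0 andbF.
rewrite intS mulrDl mul1r addrCA addrC g_shift IHk /=.
by case: (b) (odd k) (g r) => [] [] [].
Qed.

Section SubsetSumCount.

Variables (L : nat) (h : 'I_L -> int) (M : nat).

Definition subsum_count (A : {set 'I_L}) (r : int) : nat :=
  #|[set I : {set 'I_L} | (I \subset A) && (subsum h I == r %[mod M])%Z]|.

Lemma eq_subsum_count_mod (A : {set 'I_L}) (r r' : int) :
  (r = r' %[mod M])%Z -> subsum_count A r = subsum_count A r'.
Proof. by move=> rr'; apply: eq_card => I; rewrite !inE rr'. Qed.

Lemma subsum_count0 (r : int) : subsum_count set0 r = (0 == r %[mod M])%Z.
Proof.
case r0: (0 == r %[mod M])%Z; [apply: (eq_card1 (x := set0)) | apply: eq_card0];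
  move=> I; rewrite !inE subset0; case: eqP => [->|] //=.
all: by rewrite /subsum big_set0 r0.
Qed.

Lemma subsum_countU1 (a : 'I_L) (A : {set 'I_L}) (r : int) : a \notin A ->
  subsum_count (a |: A) r = (subsum_count A r + subsum_count A (r - h a))%N.
Proof.
move=> aA; rewrite /subsum_count -(cardsID [set I : {set 'I_L} | a \in I]) addnC.
congr (_ + _)%N.
  by apply: eq_card => I; rewrite !inE andbA (andbC (a \notin I)) -subsetD1 setU1K.
have sub_notin (J : {set 'I_L}) : J \subset A -> a \notin J.
  by move=> /subsetP JA; apply: contra aA => /JA.
rewrite -[in RHS](@card_in_imset _ _ (setU [set a])); last first.
  move=> J K; rewrite !inE => /andP[/sub_notin aJ _] /andP[/sub_notin aK _] JK.
  by rewrite -(setU1K aJ) -(setU1K aK) JK.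
apply: eq_card => I; rewrite !inE; apply/idP/imsetP => [|[J]].
  case/andP=> /andP[IaA rI] aI; exists (I :\ a); last by rewrite setD1K.
  rewrite inE subDset IaA /= -(eqz_modDl (h a)) subrKC.
  by rewrite /subsum (big_setD1 _ aI) in rI.
rewrite inE => /andP[JA rJ] ->; rewrite setU11 andbT setUS //=.
by rewrite /subsum big_setU1 ?sub_notin //= -(eqz_modDl (h a)) subrKC in rJ *.
Qed.

Lemma subsum_countU1_not_all_odd (a : 'I_L) (A : {set 'I_L}) :
  odd M -> a \notin A -> ~ (forall r, odd (subsum_count (a |: A) r)).
Proof.
move=> M_odd aA all_odd; pose g r := odd (subsum_count A r).
have g_shift r : g (r + h a) = true (+) g r.
  by rewrite -(all_odd (r + h a)) subsum_countU1 // addrK oddD addbK.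
have := iter_shift_addb g_shift 0 M; rewrite M_odd /g.
rewrite (@eq_subsum_count_mod A _ 0); last by rewrite add0r mulrC modzMl mod0z.
by case: odd.
Qed.

Lemma subsum_countU1_all_even (a : 'I_L) (A : {set 'I_L}) :
  (0 < M)%N -> coprimez (h a) M -> a \notin A ->
  (forall r, ~~ odd (subsum_count (a |: A) r)) ->
  forall r r', odd (subsum_count A r) = odd (subsum_count A r').
Proof.
move=> M_gt0 cop aA all_even r r'; pose g r := odd (subsum_count A r).
have g_shift r0 : g (r0 + h a) = false (+) g r0.
  move: (all_even (r0 + h a)); rewrite subsum_countU1 // addrK oddD /g.
  by case: (odd (subsum_count A (r0 + h a))) (odd (subsum_count A r0)) => [] [].
have M_nz : M%:Z != 0 by rewrite eqz_nat -lt0n.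
have [k r'_shift] := coprimez_nat_shift_mod r r' M_nz cop.
rewrite (eq_subsum_count_mod A r'_shift).
by have := iter_shift_addb g_shift r k; rewrite /g /= => ->.
Qed.

Lemma subsum_count_odd_nonconst (A : {set 'I_L}) : (1 < M)%N -> odd M ->
  {in A, forall a, coprimez (h a) M} ->
  forall b, ~ (forall r, odd (subsum_count A r) = b).
Proof.
move=> M_gt1 M_odd; move: {2}#|A| (erefl #|A|) => n.
elim: n A => [|n IHn] A cardA copA b constA.
  move/eqP: cardA; rewrite cards_eq0 => /eqP A0; move: (constA 0) (constA 1).
  by rewrite A0 !subsum_count0 eqxx mod0z modz_small ?ltz_nat // => <-.
have [A0|[a aA]] := set_0Vmem A; first by rewrite A0 cards0 in cardA.
have aA' : a \notin A :\ a by rewrite setD11.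
have cardA' : #|A :\ a| = n by move: cardA; rewrite (cardsD1 a) aA => -[].
have copA' : {in A :\ a, forall a', coprimez (h a') M}.
  by move=> x /setD1P[_ /copA].
move: constA; rewrite -(setD1K aA); case: b => constA.
  by apply: (subsum_countU1_not_all_odd M_odd aA') => r; rewrite constA.
apply: (IHn _ cardA' copA' (odd (subsum_count (A :\ a) 0))) => r.
apply: (subsum_countU1_all_even (ltnW M_gt1) (copA a aA) aA') => r0.
by rewrite constA.
Qed.

End SubsetSumCount.

Lemma mult_subsum_count (L : nat) (h : 'I_L -> int) (p v : nat) (tau : int) :
  mult h p v tau = subsum_count h (p ^ v) [set: 'I_L] tau.
Proof. by apply: eq_card => I; rewrite !inE subsetT. Qed.

Theorem lemma5p5 (p : nat) (Q0 : int) (L v : nat) (h : 'I_L -> int) :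
  prime p -> odd p -> (p%:Z %| Q0)%Z -> (0 < L)%N -> (0 < v)%N ->
  (forall tau : int, (exists I : {set 'I_L}, tau = subsum h I) ->
     ~~ odd (mult h p v tau)) ->
  exists i : 'I_L, (p%:Z %| h i)%Z.
Proof.
move=> p_pr p_odd _ _ v_gt0 mu_even.
have [i p_hi|p_ndvd_h] := pickP (fun i => (p%:Z %| h i)%Z); first by exists i.
exfalso.
have M_gt1 : (1 < p ^ v)%N by rewrite -(expn0 p) ltn_exp2l ?prime_gt1.
have M_odd : odd (p ^ v) by rewrite oddX p_odd orbT.
have cop_h : {in [set: 'I_L], forall a, coprimez (h a) (p ^ v)%N}.
  move=> a _; rewrite coprimezE /= coprimeXr // coprime_sym prime_coprime //.
  by rewrite -(absz_nat p) -dvdzE p_ndvd_h.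
apply: (subsum_count_odd_nonconst M_gt1 M_odd cop_h (b := false)) => r.
have [->//|/card_gt0P[I]] := posnP (subsum_count h (p ^ v) [set: 'I_L] r).
rewrite inE => /andP[_ /eqP Ir].
rewrite -(eq_subsum_count_mod _ _ Ir) -mult_subsum_count.
by apply/negbTE/mu_even; exists I.
Qed.
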